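(* Let $a$ be a nonzero even integer, $x\in\mathbb Z\setminus\{0\}$, $\sigma\in\{1,-1\}$, $r\in\mathbb Q\setminus\{0\}$, and suppose that $$\alpha= r\left(\frac{x+\sqrt{x^2+4\sigma}}{2}\right)^{a}$$ is a positive irrational real number. Then there is a constant $C=C(\alpha)>0$ such that $\delta_{\min}^{(\alpha)}(N)\le C/N$ for all integers $N\ge2$. (For example, this applies to $\alpha=(3+\sqrt5)/2$.)
   Context: For irrational $\alpha>0$, the numbers $\alpha m^2+n^2$ with integers $m,n\ge 1$ are pairwise distinct; list them in increasing order as $0<\lambda_1<\lambda_2<\cdots$. For $N\ge 2$ define $\delta_{\min}^{(\alpha)}(N)=\min\{\lambda_{i+1}-\lambda_i : 1\le i<N\}$. *)

From Stdlib Require Import Reals QArith Qreals ZArith Lia Lra ClassicalEpsilon.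
Open Scope R_scope.

Definition spec_set (alpha : R) (v : R) : Prop :=
  exists m n : nat, (1 <= m)%nat /\ (1 <= n)%nat /\
    v = alpha * (INR m) ^ 2 + (INR n) ^ 2.

Definition is_increasing_enum (alpha : R) (f : nat -> R) : Prop :=
  (forall i j : nat, (1 <= i)%nat -> (i < j)%nat -> f i < f j) /\
  (forall v : R, spec_set alpha v <-> exists i : nat, (1 <= i)%nat /\ f i = v).

(* lambda_ alpha i = lambda_i : the increasing enumeration (chosen by Hilbert's
   epsilon; it is unique whenever it exists). *)
Definition lambda_ (alpha : R) : nat -> R :=
  epsilon (inhabits (fun _ : nat => 0)) (is_increasing_enum alpha).

Fixpoint min_gap (f : nat -> R) (k : nat) : R :=
  match k with
  | O => f 2%nat - f 1%nat          (* unused default *)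
  | S O => f 2%nat - f 1%nat
  | S k' => Rmin (min_gap f k') (f (S k) - f k)
  end.

(* delta_min^(alpha)(N) = min { lambda_{i+1} - lambda_i : 1 <= i < N }, N >= 2. *)
Definition delta_min (alpha : R) (N : nat) : R := min_gap (lambda_ alpha) (N - 1).

From Stdlib Require Import Reals QArith Qreals ZArith Lia Lra List ClassicalEpsilon.
Open Scope R_scope.

(* Since [a] is even, [alpha = (p/q) rho^(2e)] for some [e : Z], where [rho > 1] is the
   unit [(|x| + sqrt(x^2 + 4 sigma))/2] with conjugate [rho' = -sigma/rho], and the Lucas
   numbers [L_n = rho^n + rho'^n] are integers. As [L_(n+2)^2 - L_n^2] factors as
   [(L_(n+2) - L_n) (L_(n+2) + L_n)] with both factors of size [rho^n], sixteen times it
   is [m^2 - m'^2] with [m, m' = O(rho^n)]. Shifting indices so that the main terms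
   cancel, [alpha q (L_(k+i+2)^2 - L_(k+i)^2) - p (L_(k+j+2)^2 - L_(k+j)^2)] is
   [O(rho^(-2k))], and it is nonzero because [alpha] is irrational. This yields two
   distinct numbers [alpha m^2 + p'^2] and [alpha m'^2 + p^2] of the set, of size
   [O(rho^(2k))], at distance [O(rho^(-2k))]. Since at most [N] elements of the set lie
   below [min(alpha, 1) N], such pairs at every scale give [delta_min(N) = O(1/N)]. *)

Lemma list_has_min (l : list R) :
  l <> nil -> exists w, In w l /\ forall w', In w' l -> w <= w'.
Proof.
  induction l as [|x l IH]; intros hl; [congruence|].
  destruct l as [|y l'].
  - exists x; split; [left; reflexivity|]. intros w' [<-|[]]; lra.
  - destruct IH as [w [hw hmin]]; [discriminate|].
    destruct (Rle_dec x w) as [hxw|hxw].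
    + exists x; split; [left; reflexivity|].
      intros w' [<-|hw']; [lra|]. specialize (hmin _ hw'); lra.
    + exists w; split; [right; exact hw|].
      intros w' [<-|hw']; [lra|auto].
Qed.

Lemma NoDup_map_increasing (f : nat -> R) (a K : nat) :
  (forall i j, (a <= i)%nat -> (i < j)%nat -> f i < f j) -> NoDup (map f (seq a K)).
Proof.
  revert a; induction K as [|K IH]; intros a hf; simpl; constructor.
  - intros hin. apply in_map_iff in hin as [j [e hj]]. apply in_seq in hj.
    assert (f a < f j) by (apply hf; lia). lra.
  - apply IH. intros; apply hf; lia.
Qed.

Lemma Rle_div_of_mul_le (x y z : R) : 0 < z -> x * z <= y -> x <= y / z.
Proof.
  intros hz hxy. apply (Rmult_le_reg_r z); [exact hz|].
  unfold Rdiv. rewrite Rmult_assoc, Rinv_l, Rmult_1_r; lra.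
Qed.

Lemma exists_pow_bracket (beta c y : R) :
  1 < beta -> 0 < c -> c <= y -> exists k, c * beta ^ k <= y < c * beta ^ S k.
Proof.
  intros hb hc hy.
  destruct (Pow_x_infinity beta ltac:(rewrite Rabs_right; lra) (y / c + 1)) as [K hK].
  specialize (hK K (le_n K)). rewrite Rabs_right in hK by (apply Rle_ge, pow_le; lra).
  assert (hyK : y < c * beta ^ K).
  { replace y with (c * (y / c)) by (field; lra). apply Rmult_lt_compat_l; lra. }
  assert (bracket_or_below : forall n,
    (exists k, c * beta ^ k <= y < c * beta ^ S k) \/ c * beta ^ n <= y).
  { induction n as [|n [hex|hn]]; [right; simpl; lra|left; exact hex|].
    destruct (Rlt_dec y (c * beta ^ S n)); [left; exists n; lra|right; lra]. }
  destruct (bracket_or_below K) as [hex|hK']; [exact hex|lra].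
Qed.

Lemma min_gap_le (f : nat -> R) (k l : nat) :
  (1 <= l)%nat -> (l <= k)%nat -> min_gap f k <= f (S l) - f l.
Proof.
  induction k as [|k IH]; intros h1 h2; [lia|].
  destruct k as [|k].
  - replace l with 1%nat by lia. simpl. lra.
  - change (min_gap f (S (S k)))
      with (Rmin (min_gap f (S k)) (f (S (S (S k))) - f (S (S k)))).
    destruct (Nat.eq_dec l (S (S k))) as [->|hne]; [apply Rmin_r|].
    eapply Rle_trans; [apply Rmin_l|]. apply IH; lia.
Qed.

Section Spectrum.

Variable alpha : R.
Hypothesis alpha_pos : 0 < alpha.

Let mu := Rmin alpha 1.

Lemma mu_pos : 0 < mu.
Proof. unfold mu, Rmin; destruct Rle_dec; lra. Qed.

Lemma spec_set_pos (v : R) : spec_set alpha v -> 0 < v.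
Proof.
  intros [m [n [hm [hn ->]]]].
  assert (1 <= INR n) by (apply (le_INR 1); lia). nra.
Qed.

Definition spec_box (B : nat) : list R :=
  map (fun p => alpha * INR (fst p) ^ 2 + INR (snd p) ^ 2)
      (list_prod (seq 1 B) (seq 1 B)).

Lemma length_spec_box (B : nat) : length (spec_box B) = (B * B)%nat.
Proof. unfold spec_box. rewrite length_map, length_prod, length_seq. reflexivity. Qed.

Lemma spec_set_of_spec_box (B : nat) (w : R) : In w (spec_box B) -> spec_set alpha w.
Proof.
  intros hw. apply in_map_iff in hw as [[m n] [<- hmn]].
  apply in_prod_iff in hmn as [hm hn]. apply in_seq in hm, hn.
  exists m, n. simpl. repeat split; lia.
Qed.

Lemma spec_box_of_spec_set (B : nat) (w : R) :
  spec_set alpha w -> w < mu * (INR B + 1) ^ 2 -> In w (spec_box B).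
Proof.
  intros [m [n [hm [hn ->]]]] hw.
  assert (hmu_a : mu <= alpha) by (unfold mu, Rmin; destruct Rle_dec; lra).
  assert (hmu_1 : mu <= 1) by (unfold mu, Rmin; destruct Rle_dec; lra).
  assert (hmu := mu_pos).
  assert (hB : 0 <= INR B) by apply pos_INR.
  assert (hm1 : 1 <= INR m) by (apply (le_INR 1); lia).
  assert (hn1 : 1 <= INR n) by (apply (le_INR 1); lia).
  assert (hmB : (m <= B)%nat).
  { destruct (le_lt_dec m B) as [|hlt]; [assumption|exfalso].
    apply le_INR in hlt. rewrite S_INR in hlt.
    assert (mu * (INR B + 1) ^ 2 <= alpha * INR m ^ 2); [|nra].
    apply Rmult_le_compat; [lra|nra|lra|simpl; nra]. }
  assert (hnB : (n <= B)%nat).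
  { destruct (le_lt_dec n B) as [|hlt]; [assumption|exfalso].
    apply le_INR in hlt. rewrite S_INR in hlt.
    assert (mu * (INR B + 1) ^ 2 <= INR n ^ 2); [|nra].
    replace (INR n ^ 2) with (1 * INR n ^ 2) by ring.
    apply Rmult_le_compat; [lra|nra|lra|simpl; nra]. }
  apply in_map_iff. exists (m, n). split; [reflexivity|].
  apply in_prod_iff. split; apply in_seq; lia.
Qed.

Lemma spec_count_le (B : nat) (l : list R) :
  NoDup l -> (forall w, In w l -> spec_set alpha w /\ w < mu * (INR B + 1) ^ 2) ->
  (length l <= B * B)%nat.
Proof.
  intros hnd hl. rewrite <- length_spec_box.
  apply NoDup_incl_length; [exact hnd|].
  intros w hw. destruct (hl w hw). apply spec_box_of_spec_set; assumption.
Qed.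

Lemma spec_box_covers (y : R) : exists B : nat, y < mu * (INR B + 1) ^ 2.
Proof.
  assert (hmu := mu_pos).
  destruct (INR_unbounded (y / mu)) as [B hB]. exists B.
  assert (0 <= INR B) by apply pos_INR.
  assert (y < mu * INR B).
  { replace y with (mu * (y / mu)) by (field; lra). apply Rmult_lt_compat_l; lra. }
  simpl. nra.
Qed.

Lemma spec_next (c : R) : exists w, spec_set alpha w /\ c < w /\
  forall w', spec_set alpha w' -> c < w' -> w <= w'.
Proof.
  destruct (INR_unbounded c) as [n0 hn0].
  set (w0 := alpha * INR 1 ^ 2 + INR (S n0) ^ 2).
  assert (hw0 : spec_set alpha w0) by (exists 1%nat, (S n0); repeat split; lia).
  assert (hcw0 : c < w0).
  { assert (0 <= INR n0) by apply pos_INR. unfold w0. rewrite (S_INR n0).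
    change (INR 1) with 1. nra. }
  destruct (spec_box_covers w0) as [B hB].
  set (above := fun w => if Rlt_dec c w then true else false).
  assert (h_above : forall w, above w = true <-> c < w).
  { intros w. unfold above. destruct Rlt_dec; split; congruence || lra. }
  set (L := filter above (spec_box B)).
  assert (hw0L : In w0 L).
  { apply filter_In. split; [apply spec_box_of_spec_set; assumption|apply h_above; lra]. }
  destruct (list_has_min L) as [w [hwL hmin]].
  { intros e. rewrite e in hw0L. destruct hw0L. }
  apply filter_In in hwL as [hwB hcw]. apply h_above in hcw.
  exists w. split; [eapply spec_set_of_spec_box; eassumption|]. split; [exact hcw|].
  intros w' hw' hcw'. destruct (Rle_dec w' w0).
  - apply hmin, filter_In. split; [apply spec_box_of_spec_set; auto; lra|apply h_above; lra].
  - specialize (hmin _ hw0L). lra.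
Qed.

(* Iterating [spec_next] from 0 lists the spectrum; nothing is skipped because
   only [B * B] elements lie below [mu (B+1)^2]. *)
Lemma increasing_enum_exists : exists f, is_increasing_enum alpha f.
Proof.
  assert (hnext : forall c, {w | spec_set alpha w /\ c < w /\
     forall w', spec_set alpha w' -> c < w' -> w <= w'}).
  { intros c. apply constructive_indefinite_description, spec_next. }
  set (next := fun c => proj1_sig (hnext c)).
  assert (next_spec : forall c, spec_set alpha (next c) /\ c < next c /\
     forall w', spec_set alpha w' -> c < w' -> next c <= w').
  { intros c. exact (proj2_sig (hnext c)). }
  set (f := fix f (n : nat) : R := match n with O => 0 | S n => next (f n) end).
  assert (f_incr : forall i j, (i < j)%nat -> f i < f j).
  { intros i j hij. induction hij as [|j hij IH].
    - apply next_spec.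
    - destruct (next_spec (f j)) as [_ [h _]]. simpl. lra. }
  exists f. split; [intros; apply f_incr; assumption|].
  intros v. split.
  - intros hv. apply NNPP. intros hnot.
    assert (below : forall i, f i < v).
    { induction i as [|i IH]; [apply spec_set_pos; exact hv|].
      destruct (next_spec (f i)) as [_ [_ hmin]]. specialize (hmin v hv IH).
      destruct (Req_dec (next (f i)) v) as [e|]; [|simpl; lra].
      exfalso; apply hnot. exists (S i). split; [lia|exact e]. }
    destruct (spec_box_covers v) as [B hB].
    assert (hcount := spec_count_le B (map f (seq 1 (S (B * B))))).
    rewrite length_map, length_seq in hcount.
    enough (S (B * B) <= B * B)%nat by lia.
    apply hcount.
    + apply NoDup_map_increasing. intros; apply f_incr; assumption.
    + intros w hw. apply in_map_iff in hw as [[|i] [<- hi]]; apply in_seq in hi; [lia|].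
      split; [apply next_spec|specialize (below (S i)); lra].
  - intros [[|i] [hi <-]]; [lia|]. apply next_spec.
Qed.

Lemma lambda_increasing_enum : is_increasing_enum alpha (lambda_ alpha).
Proof. unfold lambda_. apply epsilon_spec, increasing_enum_exists. Qed.

Lemma lambda_index_le (N : nat) (v : R) :
  (1 <= N)%nat -> spec_set alpha v -> v <= mu * INR N ->
  exists i, (1 <= i <= N)%nat /\ lambda_ alpha i = v.
Proof.
  intros hN hv hvN.
  destruct lambda_increasing_enum as [hincr hset].
  destruct (proj1 (hset v) hv) as [i [hi e]].
  exists i. split; [split; [exact hi|]|exact e].
  set (B := Nat.sqrt N).
  destruct (Nat.sqrt_spec N) as [hB1 hB2]; [lia|]. fold B in hB1, hB2.
  assert (hcount := spec_count_le B (map (lambda_ alpha) (seq 1 i))).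
  rewrite length_map, length_seq in hcount.
  enough (i <= B * B)%nat by lia.
  apply hcount.
  - apply NoDup_map_increasing. intros; apply hincr; lia.
  - intros w hw. apply in_map_iff in hw as [l [<- hl]]. apply in_seq in hl.
    split.
    { apply hset. exists l. split; [lia|reflexivity]. }
    assert (lambda_ alpha l <= v).
    { rewrite <- e. destruct (Nat.eq_dec l i) as [->|]; [lra|].
      apply Rlt_le, hincr; lia. }
    assert (INR N < (INR B + 1) ^ 2).
    { apply lt_INR in hB2. rewrite mult_INR, S_INR in hB2. simpl. lra. }
    assert (hmu := mu_pos). nra.
Qed.

Lemma delta_min_le_lambda_sub (N i j : nat) :
  (1 <= i)%nat -> (i < j)%nat -> (j <= N)%nat ->
  delta_min alpha N <= lambda_ alpha j - lambda_ alpha i.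
Proof.
  intros hi hij hjN. destruct lambda_increasing_enum as [hincr _].
  eapply Rle_trans; [apply (min_gap_le _ _ i); lia|].
  destruct (Nat.eq_dec (S i) j) as [<-|]; [lra|].
  assert (lambda_ alpha (S i) < lambda_ alpha j) by (apply hincr; lia). lra.
Qed.

Lemma delta_min_le_dist (N : nat) (v1 v2 : R) :
  (2 <= N)%nat -> spec_set alpha v1 -> spec_set alpha v2 -> v1 <> v2 ->
  v1 <= mu * INR N -> v2 <= mu * INR N -> delta_min alpha N <= Rabs (v1 - v2).
Proof.
  intros hN h1 h2 hne b1 b2.
  destruct (lambda_index_le N v1 ltac:(lia) h1 b1) as [i [hi <-]].
  destruct (lambda_index_le N v2 ltac:(lia) h2 b2) as [j [hj <-]].
  destruct (lt_eq_lt_dec i j) as [[hij| ->]|hji]; [|congruence|].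
  - rewrite Rabs_minus_sym. eapply Rle_trans; [|apply RRle_abs].
    apply delta_min_le_lambda_sub; lia.
  - eapply Rle_trans; [|apply RRle_abs]. apply delta_min_le_lambda_sub; lia.
Qed.

(* For [c <= mu N] take [k] with [c beta^k <= mu N < c beta^(k+1)] and use the pair at
   scale [k]; for smaller [N] the first gap [lambda_2 - lambda_1] is already [O(1/N)]. *)
Lemma delta_min_le_inv_N (beta c K : R) :
  1 < beta -> 0 < c -> 0 < K ->
  (forall k : nat, exists v1 v2, spec_set alpha v1 /\ spec_set alpha v2 /\ v1 <> v2 /\
     v1 <= c * beta ^ k /\ v2 <= c * beta ^ k /\ Rabs (v1 - v2) <= K / beta ^ k) ->
  exists C : R, 0 < C /\
    forall N : nat, (2 <= N)%nat -> delta_min alpha N <= C / INR N.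
Proof.
  intros hb hc hK pairs.
  assert (hmu := mu_pos).
  set (d := lambda_ alpha 2 - lambda_ alpha 1).
  assert (hd : 0 < d).
  { destruct lambda_increasing_enum as [hincr _].
    assert (lambda_ alpha 1 < lambda_ alpha 2) by (apply hincr; lia). unfold d; lra. }
  exists ((d + K * beta) * c / mu). split.
  { apply Rdiv_lt_0_compat; [apply Rmult_lt_0_compat; nra|exact hmu]. }
  intros N hN.
  assert (hN2 : 2 <= INR N) by (apply (le_INR 2); lia).
  replace ((d + K * beta) * c / mu / INR N) with ((d + K * beta) * c / (mu * INR N))
    by (field; lra).
  apply Rle_div_of_mul_le; [nra|].
  destruct (Rlt_le_dec (mu * INR N) c) as [hsmall|hbig].
  - assert (delta_min alpha N <= d) by (apply delta_min_le_lambda_sub; lia).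
    assert (delta_min alpha N * (mu * INR N) <= d * (mu * INR N))
      by (apply Rmult_le_compat_r; nra).
    assert (d * (mu * INR N) <= d * c) by (apply Rmult_le_compat_l; lra).
    assert (0 <= K * beta * c) by (apply Rmult_le_pos; nra).
    lra.
  - destruct (exists_pow_bracket beta c (mu * INR N) hb hc hbig) as [k [hk1 hk2]].
    destruct (pairs k) as [v1 [v2 [h1 [h2 [hne [b1 [b2 hdist]]]]]]].
    assert (hdelta := delta_min_le_dist N v1 v2 hN h1 h2 hne ltac:(lra) ltac:(lra)).
    assert (hbk : 0 < beta ^ k) by (apply pow_lt; lra).
    assert (hscale : K / beta ^ k * (mu * INR N) <= K / beta ^ k * (c * beta ^ S k)).
    { apply Rmult_le_compat_l; [apply Rlt_le, Rdiv_lt_0_compat|]; lra. }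
    replace (K / beta ^ k * (c * beta ^ S k)) with (K * beta * c) in hscale
      by (simpl; field; lra).
    assert (delta_min alpha N * (mu * INR N) <= K / beta ^ k * (mu * INR N))
      by (apply Rmult_le_compat_r; nra).
    assert (0 <= d * c) by nra.
    lra.
Qed.

End Spectrum.

Lemma rational_of_mul_IZR (alpha : R) (M P : Z) :
  (0 < M)%Z -> alpha * IZR M = IZR P -> exists q : Q, alpha = Q2R q.
Proof.
  intros hM e. exists (Qmake P (Z.to_pos M)). unfold Q2R; simpl.
  rewrite Z2Pos.id by lia. rewrite <- e. field. apply not_0_IZR; lia.
Qed.

(* [16 U V = (2U + 2V)^2 - (2U - 2V)^2], except that [U = V] would give [m' = 0];
   then [16 U^2 = (5U)^2 - (3U)^2]. *)
Lemma sq_sub_sq_16 (U V : Z) : (1 <= U)%Z -> (1 <= V)%Z ->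
  exists m m', (1 <= m)%Z /\ (1 <= m')%Z /\ (m * m - m' * m' = 16 * U * V)%Z /\
    (m <= 4 * (U + V))%Z /\ (m' <= 4 * (U + V))%Z.
Proof.
  intros hU hV. destruct (Z.eq_dec U V) as [<-|hne].
  - exists (5 * U)%Z, (3 * U)%Z. lia.
  - exists (2 * U + 2 * V)%Z, (Z.abs (2 * U - 2 * V)). lia.
Qed.

Lemma spec_set_IZR (alpha : R) (m n : Z) :
  (1 <= m)%Z -> (1 <= n)%Z -> spec_set alpha (alpha * IZR m ^ 2 + IZR n ^ 2).
Proof.
  intros hm hn. exists (Z.to_nat m), (Z.to_nat n). repeat split; try lia.
  rewrite !INR_IZR_INZ, !Z2Nat.id by lia. reflexivity.
Qed.

Fixpoint lucas_pair (t s : Z) (n : nat) : Z * Z :=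
  match n with
  | O => (2%Z, t)
  | S n => let (u, v) := lucas_pair t s n in (v, (t * v - s * u)%Z)
  end.

Definition lucas (t s : Z) (n : nat) : Z := fst (lucas_pair t s n).

Lemma lucas_SS (t s : Z) (n : nat) :
  lucas t s (S (S n)) = (t * lucas t s (S n) - s * lucas t s n)%Z.
Proof. unfold lucas; simpl. destruct (lucas_pair t s n). reflexivity. Qed.

Section QuadraticUnit.

Variables (rho rho' : R) (t s : Z).
Hypotheses (rho_gt1 : 1 < rho) (rho_add : rho + rho' = IZR t)
  (rho_mul : rho * rho' = IZR s) (s_unit : s = 1%Z \/ s = (-1)%Z).

Let L (n : nat) : Z := lucas t s n.

Lemma lucas_eq (n : nat) : IZR (L n) = rho ^ n + rho' ^ n.
Proof.
  enough (IZR (L n) = rho ^ n + rho' ^ n /\ IZR (L (S n)) = rho ^ S n + rho' ^ S n)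
    by tauto.
  induction n as [|n [IH1 IH2]].
  - unfold L, lucas; simpl. split; [lra|]. rewrite <- rho_add; ring.
  - split; [exact IH2|]. unfold L in *.
    rewrite lucas_SS, minus_IZR, !mult_IZR, IH1, IH2, <- rho_add, <- rho_mul.
    simpl; ring.
Qed.

Lemma unit_mul_sq : (rho * rho') ^ 2 = 1.
Proof. rewrite rho_mul. destruct s_unit as [-> | ->]; simpl; lra. Qed.

Lemma conj_sq : rho' ^ 2 = / rho ^ 2.
Proof.
  assert (rho ^ 2 <> 0) by (apply pow_nonzero; lra).
  apply (Rmult_eq_reg_l (rho ^ 2)); [|assumption].
  rewrite Rinv_r by assumption. rewrite <- Rpow_mult_distr. exact unit_mul_sq.
Qed.

Lemma conj_sq_pow (n : nat) : (rho' ^ 2) ^ n = / (rho ^ 2) ^ n.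
Proof. rewrite conj_sq, pow_inv. reflexivity. Qed.

Lemma conj_sq_lt1 : 0 <= rho' ^ 2 < 1.
Proof.
  rewrite conj_sq. assert (1 < rho ^ 2) by (simpl; nra).
  split; [apply Rlt_le, Rinv_0_lt_compat; lra|].
  rewrite <- Rinv_1. apply Rinv_lt_contravar; lra.
Qed.

Lemma conj_pow_bound (n : nat) : -1 <= rho' ^ n <= 1.
Proof.
  assert (hc := conj_sq_lt1). induction n as [|n IH]; simpl; [lra|]. simpl in hc. nra.
Qed.

Lemma conj_sq_pow_bound (n : nat) : 0 <= (rho' ^ 2) ^ n <= 1.
Proof.
  rewrite <- pow_mult, Nat.mul_comm, pow_mult.
  assert (h := conj_pow_bound n). simpl. nra.
Qed.

Lemma rho_pow_ge1 (n : nat) : 1 <= rho ^ n.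
Proof. induction n as [|n IH]; simpl; nra. Qed.

Lemma lucas_bounds (n : nat) : 0 <= IZR (L n) <= 2 * rho ^ n.
Proof. rewrite lucas_eq. assert (h1 := rho_pow_ge1 n). assert (h2 := conj_pow_bound n). lra. Qed.

(* The cross terms [2 (rho rho')^n] cancel because [(rho rho')^2 = 1]. *)
Lemma lucas_sq_sub (n : nat) :
  IZR (L (S (S n))) ^ 2 - IZR (L n) ^ 2
  = (rho ^ 4 - 1) * (rho ^ 2) ^ n + (rho' ^ 4 - 1) * (rho' ^ 2) ^ n.
Proof.
  rewrite !lucas_eq, <- !pow_mult, !(Nat.mul_comm 2 n), !pow_mult.
  assert (cross : rho ^ S (S n) * rho' ^ S (S n) = rho ^ n * rho' ^ n).
  { rewrite <- !Rpow_mult_distr. change (S (S n)) with (2 + n)%nat.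
    rewrite pow_add, unit_mul_sq. ring. }
  replace (rho ^ S (S n)) with (rho ^ n * rho ^ 2) in * by (simpl; ring).
  replace (rho' ^ S (S n)) with (rho' ^ n * rho' ^ 2) in * by (simpl; ring).
  replace (rho ^ 4) with ((rho ^ 2) ^ 2) by ring.
  replace (rho' ^ 4) with ((rho' ^ 2) ^ 2) by ring.
  nra.
Qed.

Lemma lucas_sub_pos (n : nat) : (0 < L (S (S n)) - L n)%Z.
Proof.
  apply lt_IZR. rewrite minus_IZR, !lucas_eq.
  assert (h1 := rho_pow_ge1 n). assert (h2 := conj_pow_bound n).
  assert (hc := conj_sq_lt1).
  assert (hsum : 2 < rho ^ 2 + rho' ^ 2).
  { rewrite conj_sq. assert (hr2 : 1 < rho ^ 2) by (simpl; nra).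
    replace (rho ^ 2 + / rho ^ 2) with (2 + (rho ^ 2 - 1) ^ 2 / rho ^ 2) by (field; lra).
    assert (0 < (rho ^ 2 - 1) ^ 2 / rho ^ 2) by (apply Rdiv_lt_0_compat; nra).
    lra. }
  replace (rho ^ S (S n)) with (rho ^ n * rho ^ 2) by (simpl; ring).
  replace (rho' ^ S (S n)) with (rho' ^ n * rho' ^ 2) by (simpl; ring).
  nra.
Qed.

Lemma lucas_add_pos (n : nat) : (0 < L (S (S n)) + L n)%Z.
Proof.
  apply lt_IZR. rewrite plus_IZR, !lucas_eq.
  assert (h1 := rho_pow_ge1 n). assert (h2 := conj_pow_bound n).
  assert (hc := conj_sq_lt1). assert (1 < rho ^ 2) by (simpl; nra).
  replace (rho ^ S (S n)) with (rho ^ n * rho ^ 2) by (simpl; ring).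
  replace (rho' ^ S (S n)) with (rho' ^ n * rho' ^ 2) by (simpl; ring).
  nra.
Qed.

Lemma lucas_sq_sub_as_sq_sub (C : Z) (n : nat) : (0 < C)%Z ->
  exists m m', (1 <= m)%Z /\ (1 <= m')%Z /\
    (m * m - m' * m' = 16 * (C * (L (S (S n)) * L (S (S n)) - L n * L n)))%Z /\
    IZR m <= 8 * (IZR C + 2) * rho ^ S (S n) /\ IZR m' <= 8 * (IZR C + 2) * rho ^ S (S n).
Proof.
  intros hC.
  assert (hsub := lucas_sub_pos n). assert (hadd := lucas_add_pos n).
  destruct (sq_sub_sq_16 (C * (L (S (S n)) - L n)) (L (S (S n)) + L n))
    as [m [m' [hm [hm' [e [bm bm']]]]]]; [nia|lia|].
  exists m, m'. split; [exact hm|]. split; [exact hm'|]. split; [rewrite e; ring|].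
  assert (hbound : IZR (4 * (C * (L (S (S n)) - L n) + (L (S (S n)) + L n)))
                   <= 8 * (IZR C + 2) * rho ^ S (S n)).
  { rewrite mult_IZR, !plus_IZR, mult_IZR, minus_IZR.
    destruct (lucas_bounds n). destruct (lucas_bounds (S (S n))).
    assert (rho ^ n <= rho ^ S (S n)).
    { replace (rho ^ S (S n)) with (rho ^ n * rho ^ 2) by (simpl; ring).
      assert (h := rho_pow_ge1 n). assert (1 < rho ^ 2) by (simpl; nra). nra. }
    assert (0 < IZR C) by (apply IZR_lt; exact hC).
    assert (IZR C * (IZR (L (S (S n))) - IZR (L n)) <= IZR C * (2 * rho ^ S (S n)))
      by (apply Rmult_le_compat_l; lra).
    lra. }
  split; eapply Rle_trans; try exact hbound; apply IZR_le; assumption.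
Qed.

Lemma sq_le_of_le_pow (u c : R) (k l : nat) :
  0 <= u -> u <= c * rho ^ (k + l) -> u ^ 2 <= (c * rho ^ l) ^ 2 * (rho ^ 2) ^ k.
Proof.
  intros h0 h1. rewrite <- pow_mult, Nat.mul_comm, pow_mult, <- Rpow_mult_distr.
  replace (c * rho ^ l * rho ^ k) with (c * rho ^ (k + l)) by (rewrite pow_add; ring).
  apply pow_incr; lra.
Qed.

Section Relation.

Variables (alpha : R) (A B : Z) (i j : nat).
Hypotheses (alpha_pos : 0 < alpha) (A_pos : (0 < A)%Z) (B_pos : (0 < B)%Z)
  (relation : alpha * IZR A * (rho ^ 2) ^ i = IZR B * (rho ^ 2) ^ j).

(* The main terms cancel by [relation]; only the conjugate terms, of size
   [rho^(-2k)], survive. *)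
Lemma lucas_combination_small (k : nat) :
  Rabs (alpha * IZR A * (IZR (L (S (S (k + i)))) ^ 2 - IZR (L (k + i)) ^ 2)
        - IZR B * (IZR (L (S (S (k + j)))) ^ 2 - IZR (L (k + j)) ^ 2))
  <= (alpha * IZR A + IZR B) / (rho ^ 2) ^ k.
Proof.
  rewrite !lucas_sq_sub, !pow_add.
  replace (alpha * IZR A * ((rho ^ 4 - 1) * ((rho ^ 2) ^ k * (rho ^ 2) ^ i)
             + (rho' ^ 4 - 1) * ((rho' ^ 2) ^ k * (rho' ^ 2) ^ i))
           - IZR B * ((rho ^ 4 - 1) * ((rho ^ 2) ^ k * (rho ^ 2) ^ j)
             + (rho' ^ 4 - 1) * ((rho' ^ 2) ^ k * (rho' ^ 2) ^ j)))
    with ((rho ^ 4 - 1) * (rho ^ 2) ^ k * (alpha * IZR A * (rho ^ 2) ^ i - IZR B * (rho ^ 2) ^ j)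
          + (rho' ^ 4 - 1) * (rho' ^ 2) ^ k
            * (alpha * IZR A * (rho' ^ 2) ^ i - IZR B * (rho' ^ 2) ^ j)) by ring.
  rewrite relation, Rminus_diag, Rmult_0_r, Rplus_0_l, (conj_sq_pow k).
  assert (hk : 0 < (rho ^ 2) ^ k) by (apply pow_lt; nra).
  assert (hc := conj_sq_lt1).
  assert (hi := conj_sq_pow_bound i). assert (hj := conj_sq_pow_bound j).
  assert (hA : 0 < IZR A) by (apply IZR_lt; exact A_pos).
  assert (hB : 0 < IZR B) by (apply IZR_lt; exact B_pos).
  assert (h4 : 0 <= rho' ^ 4 <= 1)
    by (replace (rho' ^ 4) with ((rho' ^ 2) ^ 2) by ring; simpl; nra).
  rewrite !Rabs_mult, (Rabs_right (/ _)) by (apply Rle_ge, Rlt_le, Rinv_0_lt_compat; exact hk).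
  unfold Rdiv. rewrite Rmult_comm, <- Rmult_assoc.
  apply Rmult_le_compat_r; [apply Rlt_le, Rinv_0_lt_compat; exact hk|].
  assert (Rabs (rho' ^ 4 - 1) <= 1) by (apply Rabs_le; lra).
  assert (Rabs (alpha * IZR A * (rho' ^ 2) ^ i - IZR B * (rho' ^ 2) ^ j)
          <= alpha * IZR A + IZR B).
  { apply Rabs_le. assert (0 < alpha * IZR A) by nra. split; nra. }
  assert (0 <= Rabs (rho' ^ 4 - 1)) by apply Rabs_pos.
  assert (0 <= Rabs (alpha * IZR A * (rho' ^ 2) ^ i - IZR B * (rho' ^ 2) ^ j))
    by apply Rabs_pos.
  nra.
Qed.

Hypothesis alpha_irrational : ~ exists q : Q, alpha = Q2R q.

Let c_m : R := 8 * (IZR A + 2) * rho ^ S (S i).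
Let c_p : R := 8 * (IZR B + 2) * rho ^ S (S j).

Lemma sq_le_c_m (k : nat) (z : Z) : (1 <= z)%Z ->
  IZR z <= 8 * (IZR A + 2) * rho ^ S (S (k + i)) -> IZR z ^ 2 <= c_m ^ 2 * (rho ^ 2) ^ k.
Proof.
  intros hz bz. apply sq_le_of_le_pow; [apply IZR_le; lia|].
  replace (k + S (S i))%nat with (S (S (k + i))) by lia. exact bz.
Qed.

Lemma sq_le_c_p (k : nat) (z : Z) : (1 <= z)%Z ->
  IZR z <= 8 * (IZR B + 2) * rho ^ S (S (k + j)) -> IZR z ^ 2 <= c_p ^ 2 * (rho ^ 2) ^ k.
Proof.
  intros hz bz. apply sq_le_of_le_pow; [apply IZR_le; lia|].
  replace (k + S (S j))%nat with (S (S (k + j))) by lia. exact bz.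
Qed.

(* With [m^2 - m'^2 = 16 M] and [p^2 - p'^2 = 16 P] from [lucas_sq_sub_as_sq_sub],
   the elements [alpha m^2 + p'^2] and [alpha m'^2 + p^2] differ by
   [16 (alpha M - P)]. *)
Lemma close_spec_pair (k : nat) : exists v1 v2,
  spec_set alpha v1 /\ spec_set alpha v2 /\ v1 <> v2 /\
  v1 <= (alpha * c_m ^ 2 + c_p ^ 2) * (rho ^ 2) ^ k /\
  v2 <= (alpha * c_m ^ 2 + c_p ^ 2) * (rho ^ 2) ^ k /\
  Rabs (v1 - v2) <= 16 * (alpha * IZR A + IZR B) / (rho ^ 2) ^ k.
Proof.
  destruct (lucas_sq_sub_as_sq_sub A (k + i) A_pos) as [m [m' [hm [hm' [em [bm bm']]]]]].
  destruct (lucas_sq_sub_as_sq_sub B (k + j) B_pos) as [p [p' [hp [hp' [ep [bp bp']]]]]].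
  set (M := (A * (L (S (S (k + i))) * L (S (S (k + i))) - L (k + i) * L (k + i)))%Z) in em.
  set (P := (B * (L (S (S (k + j))) * L (S (S (k + j))) - L (k + j) * L (k + j)))%Z) in ep.
  assert (hM : (0 < M)%Z).
  { assert (h := Z.mul_pos_pos _ _ (lucas_sub_pos (k + i)) (lucas_add_pos (k + i))).
    unfold M. apply Z.mul_pos_pos; [exact A_pos|lia]. }
  assert (hsmall : Rabs (alpha * IZR M - IZR P) <= (alpha * IZR A + IZR B) / (rho ^ 2) ^ k).
  { replace (alpha * IZR M - IZR P) with
      (alpha * IZR A * (IZR (L (S (S (k + i)))) ^ 2 - IZR (L (k + i)) ^ 2)
       - IZR B * (IZR (L (S (S (k + j)))) ^ 2 - IZR (L (k + j)) ^ 2))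
      by (unfold M, P; rewrite !mult_IZR, !minus_IZR, !mult_IZR; ring).
    apply lucas_combination_small. }
  apply (f_equal IZR) in em, ep. rewrite minus_IZR, !mult_IZR in em, ep.
  assert (hdiff : alpha * IZR m ^ 2 + IZR p' ^ 2 - (alpha * IZR m' ^ 2 + IZR p ^ 2)
                  = 16 * (alpha * IZR M - IZR P)) by nra.
  exists (alpha * IZR m ^ 2 + IZR p' ^ 2), (alpha * IZR m' ^ 2 + IZR p ^ 2).
  split; [apply spec_set_IZR; assumption|].
  split; [apply spec_set_IZR; assumption|].
  split.
  { intros e. apply alpha_irrational, (rational_of_mul_IZR alpha M P hM). lra. }
  split; [assert (h1 := sq_le_c_m k m hm bm); assert (h2 := sq_le_c_p k p' hp' bp'); nra|].
  split; [assert (h1 := sq_le_c_m k m' hm' bm'); assert (h2 := sq_le_c_p k p hp bp); nra|].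
  rewrite hdiff, Rabs_mult, (Rabs_right 16) by lra.
  unfold Rdiv in *. rewrite Rmult_assoc. apply Rmult_le_compat_l; lra.
Qed.

Lemma close_spec_pairs : exists c K : R, 0 < c /\ 0 < K /\
  forall k : nat, exists v1 v2, spec_set alpha v1 /\ spec_set alpha v2 /\ v1 <> v2 /\
    v1 <= c * (rho ^ 2) ^ k /\ v2 <= c * (rho ^ 2) ^ k /\
    Rabs (v1 - v2) <= K / (rho ^ 2) ^ k.
Proof.
  assert (hA : 0 < IZR A) by (apply IZR_lt; exact A_pos).
  assert (hB : 0 < IZR B) by (apply IZR_lt; exact B_pos).
  assert (hcm : 0 <= alpha * c_m ^ 2) by (apply Rmult_le_pos; [lra|apply pow2_ge_0]).
  assert (hcp : 0 < c_p ^ 2).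
  { apply pow_lt. unfold c_p. apply Rmult_lt_0_compat; [lra|apply pow_lt; lra]. }
  exists (alpha * c_m ^ 2 + c_p ^ 2), (16 * (alpha * IZR A + IZR B)).
  split; [lra|]. split; [nra|]. exact close_spec_pair.
Qed.

End Relation.

End QuadraticUnit.

Lemma even_power_as_power (eps beta : R) (a : Z) :
  0 < beta -> (eps * eps = beta \/ eps * eps = / beta) -> Z.even a = true ->
  exists e : Z, powerRZ eps a = powerRZ beta e.
Proof.
  intros hbeta heps heven.
  destruct (proj1 (Z.even_spec a) heven) as [b ->].
  assert (heps0 : eps <> 0).
  { intros ->. assert (0 < / beta) by (apply Rinv_0_lt_compat; exact hbeta).
    rewrite Rmult_0_r in heps. destruct heps; lra. }
  replace (2 * b)%Z with (b + b)%Z by lia.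
  rewrite powerRZ_add, <- powerRZ_mult by exact heps0.
  destruct heps as [-> | ->]; [exists b; reflexivity|].
  exists (- b)%Z. rewrite powerRZ_inv', powerRZ_neg'. reflexivity.
Qed.

Lemma relation_of_rational_multiple (alpha beta : R) (r : Q) (e : Z) :
  0 < alpha -> 0 < beta -> alpha = Q2R r * powerRZ beta e ->
  exists (A B : Z) (i j : nat), (0 < A)%Z /\ (0 < B)%Z /\
    alpha * IZR A * beta ^ i = IZR B * beta ^ j.
Proof.
  intros halpha hbeta he.
  assert (hq : 0 < IZR (Z.pos (Qden r))) by (apply IZR_lt; lia).
  assert (hpow : 0 < powerRZ beta e) by (apply powerRZ_lt; exact hbeta).
  assert (hnum : (0 < Qnum r)%Z).
  { apply lt_IZR. unfold Q2R in he.
    assert (0 < IZR (Qnum r) * / IZR (Z.pos (Qden r))) by nra.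
    assert (0 < / IZR (Z.pos (Qden r))) by (apply Rinv_0_lt_compat; exact hq). nra. }
  exists (Z.pos (Qden r)), (Qnum r).
  unfold Q2R in he. destruct e as [|p|p]; simpl in he.
  - exists O, O. split; [lia|]. split; [exact hnum|]. rewrite he. simpl. field. lra.
  - exists O, (Pos.to_nat p). split; [lia|]. split; [exact hnum|]. rewrite he. simpl. field. lra.
  - exists (Pos.to_nat p), O. split; [lia|]. split; [exact hnum|]. rewrite he. simpl.
    assert (0 < beta ^ Pos.to_nat p) by (apply pow_lt; exact hbeta). field. lra.
Qed.

Lemma quadratic_unit_of_discriminant (x sigma : Z) :
  x <> 0%Z -> (sigma = 1%Z \/ sigma = (-1)%Z) -> 0 < IZR x ^ 2 + 4 * IZR sigma ->
  exists rho rho', 1 < rho /\ rho + rho' = IZR (Z.abs x) /\ rho * rho' = IZR (- sigma) /\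
    (let eps := (IZR x + sqrt (IZR x ^ 2 + 4 * IZR sigma)) / 2 in
     eps * eps = rho ^ 2 \/ eps * eps = / rho ^ 2).
Proof.
  intros hx hsig hD.
  assert (hD5 : 5 <= IZR x ^ 2 + 4 * IZR sigma).
  { replace (IZR x ^ 2 + 4 * IZR sigma) with (IZR (x * x + 4 * sigma))
      in * by (rewrite plus_IZR, !mult_IZR; ring).
    apply lt_IZR in hD. apply IZR_le.
    assert (hcases : (x <= -3 \/ x = -2 \/ x = -1 \/ x = 1 \/ x = 2 \/ 3 <= x)%Z) by lia.
    destruct hsig as [-> | ->]; destruct hcases as [h|[->|[->|[->|[->|h]]]]]; nia. }
  set (sq := sqrt (IZR x ^ 2 + 4 * IZR sigma)).
  assert (hsq : sq * sq = IZR x ^ 2 + 4 * IZR sigma) by (apply sqrt_sqrt; lra).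
  assert (hsq2 : 2 <= sq) by (assert (0 <= sq) by apply sqrt_pos; nra).
  set (X := IZR (Z.abs x)).
  assert (hX : X ^ 2 = IZR x ^ 2) by (unfold X; rewrite abs_IZR; apply pow2_abs).
  assert (hX1 : 1 <= X) by (apply IZR_le; lia).
  set (rho := (X + sq) / 2). set (rho' := (X - sq) / 2).
  assert (hrho : 1 < rho) by (unfold rho; lra).
  assert (hmul : rho * rho' = IZR (- sigma)).
  { unfold rho, rho'. replace ((X + sq) / 2 * ((X - sq) / 2)) with ((X ^ 2 - sq * sq) / 4)
      by field.
    rewrite hX, hsq, opp_IZR. field. }
  exists rho, rho'. split; [exact hrho|]. split; [unfold rho, rho'; field|].
  split; [exact hmul|].
  destruct (Z_le_gt_dec 0 x) as [hpos|hneg].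
  - left. unfold rho, X. rewrite Z.abs_eq by exact hpos. ring.
  - right. rewrite <- (conj_sq rho rho' (Z.abs x) (- sigma)); [|exact hrho|exact hmul|lia].
    unfold rho', X. rewrite Z.abs_neq, opp_IZR by lia. field.
Qed.

Lemma rational_of_nonpos_discriminant (x sigma a : Z) (r : Q) :
  x <> 0%Z -> IZR x ^ 2 + 4 * IZR sigma <= 0 ->
  exists q : Q, Q2R r * powerRZ ((IZR x + sqrt (IZR x ^ 2 + 4 * IZR sigma)) / 2) a = Q2R q.
Proof.
  intros hx hD. exists (r * Qmake x 2 ^ a)%Q.
  rewrite sqrt_neg_0 by exact hD. rewrite Q2R_mult, RMicromega.Q2RpowerRZ.
  - replace ((IZR x + 0) / 2) with (Q2R (x # 2)) by (unfold Q2R; simpl; lra). reflexivity.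
  - left. intros e. apply hx. unfold Qeq in e; simpl in e. lia.
Qed.

Theorem mainTheorem9 (a x : Z) (sigma : Z) (r : Q) (alpha : R) :
  a <> 0%Z -> Z.even a = true ->
  x <> 0%Z ->
  (sigma = 1%Z \/ sigma = (-1)%Z) ->
  ~ (r == 0)%Q ->
  alpha = Q2R r * powerRZ ((IZR x + sqrt (IZR x ^ 2 + 4 * IZR sigma)) / 2) a ->
  0 < alpha ->
  (~ exists q : Q, alpha = Q2R q) ->
  exists C : R, 0 < C /\
    forall N : nat, (2 <= N)%nat -> delta_min alpha N <= C / INR N.
Proof.
  intros _ heven hx hsig _ halpha hpos hirr.
  destruct (Rle_lt_dec (IZR x ^ 2 + 4 * IZR sigma) 0) as [hD|hD].
  - exfalso. apply hirr. rewrite halpha. apply rational_of_nonpos_discriminant; assumption.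
  - destruct (quadratic_unit_of_discriminant x sigma hx hsig hD)
      as (rho & rho' & hrho & hadd & hmul & heps).
    assert (hrho2 : 0 < rho ^ 2) by (apply pow_lt; lra).
    destruct (even_power_as_power _ _ a hrho2 heps heven) as [e he].
    rewrite he in halpha.
    destruct (relation_of_rational_multiple alpha (rho ^ 2) r e hpos hrho2 halpha)
      as (A & B & i & j & hA & hB & hrel).
    destruct (close_spec_pairs rho rho' (Z.abs x) (- sigma) hrho hadd hmul
                ltac:(lia) alpha A B i j hpos hA hB hrel hirr) as (c & K & hc & hK & pairs).
    apply (delta_min_le_inv_N alpha hpos (rho ^ 2) c K); [simpl; nra|exact hc|exact hK|exact pairs].
Qed.
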